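(* Assume inhibitory coupling ($\varepsilon_{ij}\le0$ for all $i,j$ and $\varepsilon<0$). Assume the directed graph $G$ with an edge $j\to i$ exactly when $j\in\mathrm{Pre}(i)$ is strongly connected, and let $l_c\le N-1$ be its diameter. Let $\boldsymbol\delta(0)\in\mathbb R^N$, and define $\boldsymbol\delta(l)=A(\mathcal O_l)\boldsymbol\delta(l-1)$ for $l\ge1$. Here $\mathcal O_l$ is an ordering consistent with $\boldsymbol\delta(l-1)$: for each $i$, $\delta_{j_1(i)}(l-1)\ge\delta_{j_2(i)}(l-1)\ge\dots\ge\delta_{j_{k_i}(i)}(l-1)$. Then: 1. If all $\delta_i(0)\ge0$ and $\boldsymbol\delta(0)$ is not a multiple of $(1,\dots,1)^{\mathsf T}$, then $\max_i\delta_i(l)<\max_i\delta_i(0)$ for all $l\ge l_c$. 2. There is a constant $c\in\mathbb R$ such that $\boldsymbol\delta(l)\to c\,(1,\dots,1)^{\mathsf T}$ as $l\to\infty$; that is, the synchronous state is asymptotically stable (modulo uniform phase shifts).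
   Context: Let $U$ be a twice continuously differentiable, strictly increasing function on an interval $I\subseteq\mathbb R$ containing $(-\infty,1]$. Assume $U'>0$ and $U''<0$ on $I$, $U(0)=0$ and $U(1)=1$. Fix $N\ge 2$ and a delay $\tau\in(0,1)$. For each $i$ fix a nonempty set $\mathrm{Pre}(i)\subseteq\{1,\dots,N\}\setminus\{i\}$ and put $k_i=|\mathrm{Pre}(i)|$. Fix real couplings $\varepsilon_{ij}$ with $\varepsilon_{ij}\neq0$ if and only if $j\in\mathrm{Pre}(i)$, normalized so that $\sum_j\varepsilon_{ij}=\varepsilon$ for every $i$. An ordering $\mathcal O$ is a choice, for each $i$, of an enumeration $j_1(i),\dots,j_{k_i}(i)$ of $\mathrm{Pre}(i)$. For $n\in\{0,\dots,k_i\}$ define $$p_{i,n}=\frac{U'\Big(U^{-1}\big(U(\tau)+\sum_{m=1}^{n}\varepsilon_{ij_m(i)}\big)\Big)}{U'\big(U^{-1}(U(\tau)+\varepsilon)\big)}.$$ The stability matrix $A(\mathcal O)$ has entries - $A_{ii}=p_{i,0}$; - $A_{ij}=p_{i,n}-p_{i,n-1}$ if $j=j_n(i)$; - $A_{ij}=0$ if $j\notin\mathrm{Pre}(i)\cup\{i\}$. The diameter of a strongly connected digraph is the maximum over ordered pairs of vertices of the length of a shortest directed path between them. *)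

(* classical reals. Nodes are indexed 0..N-1 (paper: 1..N). *)
From Stdlib Require Import Reals List Arith.
Import ListNotations.
Open Scope R_scope.

Fixpoint rsum (f : nat -> R) (n : nat) : R :=
  match n with O => 0 | S k => rsum f k + f k end.

Fixpoint maxUpTo (f : nat -> R) (n : nat) : R :=
  match n with O => f O | S k => Rmax (maxUpTo f k) (f (S k)) end.

Definition vmax (N : nat) (f : nat -> R) : R := maxUpTo f (N - 1).

Definition is_interval (I : R -> Prop) : Prop :=
  forall a b c, I a -> I c -> a <= b -> b <= c -> I b.

Definition Pre (N : nat) (eps : nat -> nat -> R) (i j : nat) : Prop :=
  (j < N)%nat /\ eps i j <> 0.

Definition is_ordering (N : nat) (eps : nat -> nat -> R) (Ord : nat -> list nat) : Prop :=
  forall i, (i < N)%nat ->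
    NoDup (Ord i) /\ forall j, In j (Ord i) <-> Pre N eps i j.

Definition p_coef (U dU Uinv : R -> R) (tau epsilon : R) (eps : nat -> nat -> R)
    (Ord : nat -> list nat) (i n : nat) : R :=
  dU (Uinv (U tau + rsum (fun m => eps i (nth m (Ord i) 0%nat)) n))
  / dU (Uinv (U tau + epsilon)).

Fixpoint pos (j : nat) (l : list nat) : option nat :=
  match l with
  | [] => None
  | x :: r => if Nat.eqb x j then Some O
              else match pos j r with Some k => Some (S k) | None => None end
  end.

(* Stability matrix A(O). For j = j_n(i) (1-based n = m+1 where m is the 0-based
   position), A_ij = p_{i,m+1} - p_{i,m}. *)
Definition Amat (U dU Uinv : R -> R) (tau epsilon : R) (eps : nat -> nat -> R)
    (Ord : nat -> list nat) (i j : nat) : R :=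
  if Nat.eqb i j then p_coef U dU Uinv tau epsilon eps Ord i 0
  else match pos j (Ord i) with
       | Some m => p_coef U dU Uinv tau epsilon eps Ord i (S m)
                   - p_coef U dU Uinv tau epsilon eps Ord i m
       | None => 0
       end.

Definition consistent (N : nat) (Ord : nat -> list nat) (d : nat -> R) : Prop :=
  forall i, (i < N)%nat -> forall m1 m2, (m1 < m2)%nat -> (m2 < length (Ord i))%nat ->
    d (nth m1 (Ord i) 0%nat) >= d (nth m2 (Ord i) 0%nat).

Inductive walk (N : nat) (eps : nat -> nat -> R) : nat -> nat -> nat -> Prop :=
  | walk0 : forall a, walk N eps 0 a a
  | walkS : forall k a b c, walk N eps k a b -> Pre N eps c b -> walk N eps (S k) a c.

Definition strongly_connected (N : nat) (eps : nat -> nat -> R) : Prop :=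
  forall a b, (a < N)%nat -> (b < N)%nat -> exists k, walk N eps k a b.

Definition is_diameter (N : nat) (eps : nat -> nat -> R) (lc : nat) : Prop :=
  (forall a b, (a < N)%nat -> (b < N)%nat -> exists k, (k <= lc)%nat /\ walk N eps k a b) /\
  (exists a b, (a < N)%nat /\ (b < N)%nat /\ forall k, (k < lc)%nat -> ~ walk N eps k a b).

From Pilot Require Import Defs.
From Stdlib Require Import Reals List Arith.
From Stdlib Require Import Lra Lia Ranalysis5 Classical_Prop.
Open Scope R_scope.

(** - Averaging dynamics: if every [d (S l) i] is a convex combination of
      the [d l j] giving weight at least [alpha > 0] to [i] itself and to
      each in-neighbour of [i], then a deficit [max - d l0 a] travels along
      walks, shrinking by a factor [alpha] per step.  With walks of length
      at most [lc] between any two nodes, the maximum strictly drops after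
      [lc] steps unless the vector is constant, and the spread [max - min]
      contracts by [1 - alpha ^ lc] every [lc] steps, forcing consensus.
    - Analysis of [U]: the profile [g S = U'(U^{-1}(U tau + S))] is, on
      [[epsilon, 0]], bounded in [[K0, Dm]] with [K0 > 0], and decreasing
      with slope at least [K1 > 0] (concavity with continuous [U'']).
    - Stability matrix: for an inhibitory coupling the partial sums [S_n]
      decrease from 0 to [epsilon], so [p_{i,n} = g(S_n) / g(epsilon)]
      increases to 1; hence every row of [A(O)] is a probability vector
      whose entries on the diagonal and on [Pre(i)] exceed a floor
      independent of the ordering.  The theorem follows by instantiating
      the averaging results with [W l = A(O_{l+1})]. *)

Lemma rsum_ext f g n : (forall j, (j < n)%nat -> f j = g j) -> rsum f n = rsum g n.
Proof. induction n; simpl; intros H; auto. rewrite IHn, H; auto. Qed.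

Lemma rsum_plus f g n : rsum (fun j => f j + g j) n = rsum f n + rsum g n.
Proof. induction n; simpl; [lra | rewrite IHn; lra]. Qed.

Lemma rsum_minus f g n : rsum (fun j => f j - g j) n = rsum f n - rsum g n.
Proof. induction n; simpl; [lra | rewrite IHn; lra]. Qed.

Lemma rsum_scal c f n : rsum (fun j => c * f j) n = c * rsum f n.
Proof. induction n; simpl; [lra | rewrite IHn; lra]. Qed.

Lemma rsum_zero f n : (forall j, (j < n)%nat -> f j = 0) -> rsum f n = 0.
Proof. induction n; simpl; intros H; auto. rewrite IHn, H; auto; lra. Qed.

Lemma rsum_le f g n : (forall j, (j < n)%nat -> f j <= g j) -> rsum f n <= rsum g n.
Proof.
  induction n; simpl; intros H; [lra |].
  pose proof (H n ltac:(lia)). pose proof (IHn ltac:(intros; apply H; lia)). lra.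
Qed.

Lemma rsum_nonneg f n : (forall j, (j < n)%nat -> 0 <= f j) -> 0 <= rsum f n.
Proof.
  intros H. rewrite <- (rsum_zero (fun _ => 0) n) by auto. now apply rsum_le.
Qed.

Lemma rsum_ge_term f n k :
  (forall j, (j < n)%nat -> 0 <= f j) -> (k < n)%nat -> f k <= rsum f n.
Proof.
  induction n; intros Hf Hk; [lia |]. simpl.
  pose proof (Hf n ltac:(lia)) as Hn.
  destruct (Nat.eq_dec k n) as [-> | Hkn].
  - pose proof (rsum_nonneg f n ltac:(intros; apply Hf; lia)). lra.
  - pose proof (IHn ltac:(intros; apply Hf; lia) ltac:(lia)). lra.
Qed.

Lemma rsum_shift f n : rsum f (S n) = f 0%nat + rsum (fun m => f (S m)) n.
Proof. induction n; simpl in *; [ring | rewrite IHn; ring]. Qed.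

Lemma rsum_telescope p n : rsum (fun m => p (S m) - p m) n = p n - p 0%nat.
Proof. induction n; simpl; [ring | rewrite IHn; ring]. Qed.

Lemma rsum_point f n x : (x < n)%nat ->
  rsum f n = rsum (fun j => if Nat.eqb j x then 0 else f j) n + f x.
Proof.
  induction n; intros Hx; [lia |]. simpl. destruct (Nat.eq_dec x n) as [-> | Hxn].
  - rewrite Nat.eqb_refl, (rsum_ext (fun j => if Nat.eqb j n then 0 else f j) f); [ring |].
    intros j Hj. destruct (Nat.eqb_spec j n); [lia | auto].
  - rewrite IHn by lia. destruct (Nat.eqb_spec n x); [lia | ring].
Qed.

Lemma rsum_indicator n i v : (i < n)%nat -> rsum (fun j => if Nat.eqb i j then v else 0) n = v.
Proof.
  intros Hi. rewrite (rsum_point _ n i Hi), Nat.eqb_refl, rsum_zero; [ring |].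
  intros j _. destruct (Nat.eqb_spec j i), (Nat.eqb_spec i j); auto; lia.
Qed.

Lemma rsum_along_list N : forall l f, NoDup l -> (forall x, In x l -> (x < N)%nat) ->
  (forall j, (j < N)%nat -> ~ In j l -> f j = 0) ->
  rsum f N = rsum (fun m => f (nth m l 0%nat)) (length l).
Proof.
  induction l as [| x r IH]; intros f Hnd Hlt Hz.
  - apply rsum_zero. intros j Hj. now apply Hz.
  - inversion Hnd as [| ? ? Hx Hnd']; subst.
    rewrite (rsum_point f N x) by (apply Hlt; now left).
    rewrite (IH (fun j => if Nat.eqb j x then 0 else f j)); auto.
    + simpl length. rewrite rsum_shift. simpl.
      rewrite (rsum_ext _ (fun m => f (nth m r 0%nat))); [ring |].
      intros m Hm. destruct (Nat.eqb_spec (nth m r 0%nat) x) as [E | E]; auto.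
      exfalso. apply Hx. rewrite <- E. now apply nth_In.
    + intros y Hy. apply Hlt. now right.
    + intros j Hj Hn. destruct (Nat.eqb_spec j x); auto.
      apply Hz; auto. intros [E | E]; auto.
Qed.

Lemma rsum_partial_nonpos (g : nat -> R) n : (forall t, (t < n)%nat -> g t <= 0) ->
  forall m, (m <= n)%nat -> rsum g n <= rsum g m <= 0.
Proof.
  induction n; intros Hg m Hm.
  - replace m with 0%nat by lia. simpl; lra.
  - pose proof (Hg n ltac:(lia)).
    destruct (IHn ltac:(intros; apply Hg; lia) n (le_n _)).
    destruct (Nat.eq_dec m (S n)) as [-> | Hmn]; simpl; [lra |].
    destruct (IHn ltac:(intros; apply Hg; lia) m ltac:(lia)). lra.
Qed.

Lemma nonzero_entries_bounded_away (f : nat -> nat -> R) n m :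
  exists e, 0 < e /\
    forall i j, (i < n)%nat -> (j < m)%nat -> f i j <> 0 -> e <= Rabs (f i j).
Proof.
  assert (Hrow : forall g : nat -> R, exists e, 0 < e /\
            forall k, (k < m)%nat -> g k <> 0 -> e <= Rabs (g k)).
  { intros g. induction m as [| m [e [He H]]].
    - exists 1. split; [lra | intros; lia].
    - destruct (Req_dec (g m) 0) as [Hz | Hnz].
      + exists e. split; auto. intros k Hk Hg.
        destruct (Nat.eq_dec k m) as [-> | ]; [contradiction | apply H; auto; lia].
      + exists (Rmin e (Rabs (g m))). split; [apply Rmin_pos; auto; now apply Rabs_pos_lt |].
        intros k Hk Hg. destruct (Nat.eq_dec k m) as [-> | ]; [apply Rmin_r |].
        eapply Rle_trans; [apply Rmin_l | apply H; auto; lia]. }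
  induction n as [| n [e [He H]]].
  - exists 1. split; [lra | intros; lia].
  - destruct (Hrow (f n)) as [e' [He' H']].
    exists (Rmin e e'). split; [now apply Rmin_pos |].
    intros i j Hi Hj Hf. destruct (Nat.eq_dec i n) as [-> | ].
    + eapply Rle_trans; [apply Rmin_r | now apply H'].
    + eapply Rle_trans; [apply Rmin_l | apply H; auto; lia].
Qed.

Lemma maxUpTo_ge f n i : (i <= n)%nat -> f i <= maxUpTo f n.
Proof.
  induction n; intros Hi; simpl; [replace i with 0%nat by lia; lra |].
  destruct (Nat.eq_dec i (S n)) as [-> | ]; [apply Rmax_r |].
  eapply Rle_trans; [apply IHn; lia | apply Rmax_l].
Qed.

Lemma maxUpTo_le f n B : (forall i, (i <= n)%nat -> f i <= B) -> maxUpTo f n <= B.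
Proof.
  induction n; intros H; simpl; [apply H; lia |].
  apply Rmax_lub; [apply IHn; intros; apply H; lia | apply H; lia].
Qed.

Lemma maxUpTo_attained f n : exists i, (i <= n)%nat /\ maxUpTo f n = f i.
Proof.
  induction n as [| n [i [Hi E]]]; simpl; [now exists 0%nat |].
  unfold Rmax. destruct (Rle_dec (maxUpTo f n) (f (S n))).
  - now exists (S n).
  - exists i. split; auto.
Qed.

Lemma vmax_ge N f i : (i < N)%nat -> f i <= vmax N f.
Proof. intros. apply maxUpTo_ge. lia. Qed.

Lemma vmax_le N f B : (1 <= N)%nat -> (forall i, (i < N)%nat -> f i <= B) -> vmax N f <= B.
Proof. intros HN H. apply maxUpTo_le. intros. apply H. lia. Qed.

Lemma vmax_attained N f : (1 <= N)%nat -> exists i, (i < N)%nat /\ vmax N f = f i.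
Proof.
  intros HN. destruct (maxUpTo_attained f (N - 1)) as [i [Hi E]].
  exists i. split; [lia | exact E].
Qed.

Definition vmin (N : nat) (f : nat -> R) : R := - vmax N (fun i => - f i).

Lemma vmin_le N f i : (i < N)%nat -> vmin N f <= f i.
Proof. intros Hi. pose proof (vmax_ge N (fun i => - f i) i Hi). unfold vmin. lra. Qed.

Lemma vmin_attained N f : (1 <= N)%nat -> exists i, (i < N)%nat /\ vmin N f = f i.
Proof.
  intros HN. destruct (vmax_attained N (fun i => - f i) HN) as [i [Hi E]].
  exists i. split; auto. unfold vmin. rewrite E. ring.
Qed.


Lemma Un_cv_squeeze (u v w : nat -> R) c :
  (forall n, u n <= v n <= w n) -> Un_cv u c -> Un_cv w c -> Un_cv v c.
Proof.
  intros Hb Hu Hw e He.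
  destruct (Hu e He) as [n1 H1]. destruct (Hw e He) as [n2 H2].
  exists (max n1 n2). intros n Hn. unfold Rdist in *.
  specialize (H1 n ltac:(lia)). specialize (H2 n ltac:(lia)). specialize (Hb n).
  apply Rabs_def2 in H1, H2. apply Rabs_def1; lra.
Qed.

Lemma Un_cv_contracting (u : nat -> R) k q :
  0 <= q < 1 -> (forall n, 0 <= u n) -> (forall n, u (S n) <= u n) ->
  (forall n, u (n + k)%nat <= q * u n) -> Un_cv u 0.
Proof.
  intros Hq Hpos Hdec Hk.
  assert (Hmono : forall n t, u (n + t)%nat <= u n).
  { intros n t. induction t; [rewrite Nat.add_0_r; lra |].
    rewrite Nat.add_succ_r. eapply Rle_trans; [apply Hdec | exact IHt]. }
  assert (Hgeom : forall n, u (n * k)%nat <= q ^ n * u 0%nat).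
  { induction n; simpl; [lra |].
    rewrite Nat.add_comm. eapply Rle_trans; [apply Hk |].
    rewrite Rmult_assoc. apply Rmult_le_compat_l; lra. }
  intros e He.
  destruct (pow_lt_1_zero q ltac:(rewrite Rabs_pos_eq; lra) (e / (u 0%nat + 1)))
    as [n Hn]; [apply Rdiv_lt_0_compat; auto; pose proof (Hpos 0%nat); lra |].
  specialize (Hn n (le_n _)). rewrite Rabs_pos_eq in Hn by (apply pow_le; lra).
  exists (n * k)%nat. intros m Hm. unfold Rdist. rewrite Rminus_0_r, Rabs_pos_eq by auto.
  replace m with (n * k + (m - n * k))%nat by lia.
  pose proof (Hpos 0%nat).
  assert (q ^ n * u 0%nat <= q ^ n * (u 0%nat + 1))
    by (apply Rmult_le_compat_l; [apply pow_le |]; lra).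
  assert (q ^ n * (u 0%nat + 1) < e).
  { apply (Rmult_lt_compat_r (u 0%nat + 1)) in Hn; [| lra].
    unfold Rdiv in Hn. rewrite Rmult_assoc, Rinv_l, Rmult_1_r in Hn by lra. exact Hn. }
  pose proof (Hmono (n * k)%nat (m - n * k)%nat). pose proof (Hgeom n). lra.
Qed.

(** * Averaging dynamics on a graph *)

Definition walk_bound (N : nat) (eps : nat -> nat -> R) (lc : nat) : Prop :=
  forall a b, (a < N)%nat -> (b < N)%nat -> exists k, (k <= lc)%nat /\ walk N eps k a b.

Section Averaging.

Variables (N : nat) (eps : nat -> nat -> R) (W : nat -> nat -> nat -> R) (alpha : R).
Hypothesis HN : (1 <= N)%nat.
Hypothesis Halpha : 0 < alpha.
Hypothesis W_nonneg : forall l i j, (i < N)%nat -> (j < N)%nat -> 0 <= W l i j.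
Hypothesis W_stochastic : forall l i, (i < N)%nat -> rsum (W l i) N = 1.
Hypothesis W_diag : forall l i, (i < N)%nat -> alpha <= W l i i.
Hypothesis W_edge : forall l i j, (i < N)%nat -> Pre N eps i j -> alpha <= W l i j.

Definition averaged (d : nat -> nat -> R) : Prop :=
  forall l i, (i < N)%nat -> d (S l) i = rsum (fun j => W l i j * d l j) N.

Lemma averaged_opp d : averaged d -> averaged (fun l i => - d l i).
Proof.
  intros Hd l i Hi. rewrite Hd by auto.
  replace (- _) with (-1 * rsum (fun j => W l i j * d l j) N) by ring.
  rewrite <- rsum_scal. apply rsum_ext. intros. ring.
Qed.

Section Deficit.

Variable d : nat -> nat -> R.
Hypothesis Hd : averaged d.

Lemma deficit_step l M : (forall j, (j < N)%nat -> d l j <= M) ->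
  forall i k, (i < N)%nat -> (k < N)%nat -> W l i k * (M - d l k) <= M - d (S l) i.
Proof.
  intros HM i k Hi Hk.
  replace (M - d (S l) i) with (rsum (fun j => W l i j * (M - d l j)) N).
  - apply (rsum_ge_term (fun j => W l i j * (M - d l j))); auto.
    intros j Hj. apply Rmult_le_pos; auto. pose proof (HM j Hj). lra.
  - rewrite Hd by auto.
    rewrite (rsum_ext _ (fun j => M * W l i j - W l i j * d l j)) by (intros; ring).
    rewrite rsum_minus, rsum_scal, W_stochastic by auto. ring.
Qed.

Lemma upper_bound_persists l0 M : (forall j, (j < N)%nat -> d l0 j <= M) ->
  forall t j, (j < N)%nat -> d (l0 + t)%nat j <= M.
Proof.
  intros HM t. induction t as [| t IH]; intros j Hj; [rewrite Nat.add_0_r; auto |].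
  rewrite Nat.add_succ_r.
  pose proof (deficit_step (l0 + t) M IH j j Hj Hj).
  pose proof (W_nonneg (l0 + t) j j Hj Hj). pose proof (IH j Hj).
  assert (0 <= W (l0 + t)%nat j j * (M - d (l0 + t)%nat j)) by (apply Rmult_le_pos; lra).
  lra.
Qed.

Lemma deficit_edge l0 M X t k i :
  (forall j, (j < N)%nat -> d l0 j <= M) -> (i < N)%nat -> (k = i \/ Pre N eps i k) ->
  alpha ^ t * X <= M - d (l0 + t)%nat k ->
  alpha ^ S t * X <= M - d (l0 + S t)%nat i.
Proof.
  intros HM Hi Hki HX.
  assert (Hk : (k < N)%nat) by (destruct Hki as [-> | [Hk _]]; auto).
  assert (Hw : alpha <= W (l0 + t)%nat i k)
    by (destruct Hki as [-> | Hp]; [apply W_diag | apply W_edge]; auto).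
  pose proof (upper_bound_persists l0 M HM t k Hk).
  pose proof (deficit_step (l0 + t) M (upper_bound_persists l0 M HM t) i k Hi Hk).
  rewrite Nat.add_succ_r. simpl.
  assert (alpha * (alpha ^ t * X) <= alpha * (M - d (l0 + t)%nat k))
    by (apply Rmult_le_compat_l; lra).
  assert (alpha * (M - d (l0 + t)%nat k) <= W (l0 + t)%nat i k * (M - d (l0 + t)%nat k))
    by (apply Rmult_le_compat_r; lra).
  lra.
Qed.

Lemma deficit_walk l0 M : (forall j, (j < N)%nat -> d l0 j <= M) ->
  forall k a c, walk N eps k a c -> (c < N)%nat -> forall t, (k <= t)%nat ->
  alpha ^ t * (M - d l0 a) <= M - d (l0 + t)%nat c.
Proof.
  intros HM k a c Hw. induction Hw as [a | k a b c Hw IH Hcb]; intros Hc t Ht.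
  - induction t as [| t IHt]; [rewrite Nat.add_0_r; simpl; lra |].
    apply (deficit_edge l0 M _ t a a HM Hc (or_introl eq_refl)). apply IHt. lia.
  - destruct t as [| t]; [lia |].
    apply (deficit_edge l0 M _ t b c HM Hc (or_intror Hcb)).
    apply IH; [apply Hcb | lia].
Qed.


Lemma deficit_spreads lc l0 : walk_bound N eps lc ->
  forall t i j, (lc <= t)%nat -> (i < N)%nat -> (j < N)%nat ->
  alpha ^ t * (vmax N (d l0) - d l0 j) <= vmax N (d l0) - d (l0 + t)%nat i.
Proof.
  intros Hlc t i j Ht Hi Hj. destruct (Hlc j i Hj Hi) as [k [Hk Hw]].
  eapply deficit_walk; eauto; [intros; now apply vmax_ge | lia].
Qed.

Lemma vmax_nonincreasing l : vmax N (d (S l)) <= vmax N (d l).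
Proof.
  apply vmax_le; auto. intros i Hi.
  pose proof (upper_bound_persists l (vmax N (d l)) (fun j Hj => vmax_ge N _ j Hj) 1 i Hi)
    as Hstep.
  now rewrite Nat.add_1_r in Hstep.
Qed.

End Deficit.

Lemma vmin_nondecreasing d : averaged d -> forall l, vmin N (d l) <= vmin N (d (S l)).
Proof.
  intros Hd l. pose proof (vmax_nonincreasing _ (averaged_opp d Hd) l). unfold vmin. lra.
Qed.

Section Spread.

Variable d : nat -> nat -> R.
Hypothesis Hd : averaged d.

Lemma vmax_vmin_monotone l t :
  vmin N (d l) <= vmin N (d (l + t)%nat) /\ vmax N (d (l + t)%nat) <= vmax N (d l).
Proof.
  induction t as [| t IH]; [rewrite Nat.add_0_r; lra |]. rewrite Nat.add_succ_r.
  pose proof (vmin_nondecreasing d Hd (l + t)). pose proof (vmax_nonincreasing d Hd (l + t)).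
  lra.
Qed.

Lemma vmin_le_vmax l : vmin N (d l) <= vmax N (d l).
Proof. pose proof (vmin_le N (d l) 0 HN). pose proof (vmax_ge N (d l) 0 HN). lra. Qed.

Lemma spread_contracts lc l0 : walk_bound N eps lc ->
  vmax N (d (l0 + lc)%nat) - vmin N (d (l0 + lc)%nat)
  <= (1 - alpha ^ lc) * (vmax N (d l0) - vmin N (d l0)).
Proof.
  intros Hlc. destruct (vmin_attained N (d l0) HN) as [j [Hj Emin]].
  assert (vmax N (d (l0 + lc)%nat)
          <= vmax N (d l0) - alpha ^ lc * (vmax N (d l0) - vmin N (d l0))).
  { apply vmax_le; auto. intros i Hi. rewrite Emin.
    pose proof (deficit_spreads d Hd lc l0 Hlc lc i j (le_n _) Hi Hj). lra. }
  pose proof (vmax_vmin_monotone l0 lc). lra.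
Qed.

Theorem averaging_consensus lc : walk_bound N eps lc ->
  exists c, forall i, (i < N)%nat -> Un_cv (fun l => d l i) c.
Proof.
  intros Hlc.
  set (spread := fun l => vmax N (d l) - vmin N (d l)).
  assert (Hdec : Un_decreasing (fun l => vmax N (d l)))
    by (intro l; apply (vmax_nonincreasing d Hd)).
  assert (Hlb : has_lb (fun l => vmax N (d l))).
  { exists (- vmin N (d 0%nat)). intros x [n ->]. unfold opp_seq.
    pose proof (vmax_vmin_monotone 0 n). pose proof (vmin_le_vmax n). simpl in *. lra. }
  destruct (decreasing_cv _ Hdec Hlb) as [c Hmax]. exists c.
  assert (Hq : 0 <= 1 - alpha ^ lc < 1).
  { assert (alpha <= 1).
    { pose proof (W_diag 0 0 HN). pose proof (W_stochastic 0 0 HN).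
      pose proof (rsum_ge_term (W 0 0) N 0 (fun j Hj => W_nonneg 0 0 j HN Hj) HN). lra. }
    pose proof (pow_lt alpha lc Halpha). pose proof (pow_incr alpha 1 lc ltac:(lra)).
    rewrite pow1 in *. lra. }
  assert (Hspread : Un_cv spread 0).
  { apply (Un_cv_contracting spread lc (1 - alpha ^ lc)); auto.
    - intro n. unfold spread. pose proof (vmin_le_vmax n). lra.
    - intro n. unfold spread. pose proof (vmax_vmin_monotone n 1) as Hstep.
      rewrite Nat.add_1_r in Hstep. lra.
    - intro n. apply spread_contracts, Hlc. }
  assert (Hmin : Un_cv (fun l => vmin N (d l)) c).
  { replace c with (c - 0) by ring.
    apply (Un_cv_ext (fun l => vmax N (d l) - spread l)); [intro; unfold spread; ring |].
    now apply CV_minus. }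
  intros i Hi. apply (Un_cv_squeeze _ _ _ c) with (2 := Hmin) (3 := Hmax).
  intro n. split; [apply vmin_le | apply vmax_ge]; auto.
Qed.

Theorem averaging_max_drops lc : walk_bound N eps lc ->
  ~ (exists c, forall i, (i < N)%nat -> d 0%nat i = c) ->
  forall l, (lc <= l)%nat -> vmax N (d l) < vmax N (d 0%nat).
Proof.
  intros Hlc Hnc l Hl.
  assert (Hbelow : exists j, (j < N)%nat /\ d 0%nat j < vmax N (d 0%nat)).
  { apply NNPP. intros Hno. apply Hnc. exists (vmax N (d 0%nat)). intros i Hi.
    destruct (Rle_lt_or_eq_dec _ _ (vmax_ge N (d 0%nat) i Hi)) as [Hlt | ]; auto.
    exfalso. apply Hno. now exists i. }
  destruct Hbelow as [j [Hj Hlt]].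
  destruct (vmax_attained N (d l) HN) as [i [Hi ->]].
  pose proof (deficit_spreads d Hd lc 0 Hlc l i j Hl Hi Hj) as Hdef. simpl in Hdef.
  assert (0 < alpha ^ l * (vmax N (d 0%nat) - d 0%nat j))
    by (apply Rmult_lt_0_compat; [now apply pow_lt | lra]).
  lra.
Qed.

End Spread.

End Averaging.


(** * The level profile of a concave utility

   [level_profile U dU Uinv tau S = U'(U^{-1}(U tau + S))] is the quantity the
   coefficients [p_{i,n}] are built from.  For [S] in [[epsilon, 0]] it is
   bounded above and away from 0, and it strictly decreases with slope
   bounded away from 0 (because [U''] is negative and continuous). *)

Definition level_profile (U dU Uinv : R -> R) (tau S : R) : R := dU (Uinv (U tau + S)).

Lemma interior_below_one (I : R -> Prop) : (forall x, x <= 1 -> I x) ->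
  forall x, x < 1 -> interior I x.
Proof.
  intros HIle x Hx. assert (Hr : 0 < 1 - x) by lra.
  exists (mkposreal _ Hr). intros y Hy. unfold disc in Hy; simpl in Hy.
  apply HIle. apply Rabs_def2 in Hy. lra.
Qed.

Section LevelProfile.

Variables (I : R -> Prop) (U dU d2U Uinv : R -> R).
Hypothesis HIle : forall x, x <= 1 -> I x.
Hypothesis HdU : forall x, interior I x -> derivable_pt_lim U x (dU x).
Hypothesis Hd2U : forall x, interior I x -> derivable_pt_lim dU x (d2U x).
Hypothesis Hd2Uc : forall x, interior I x -> continuity_pt d2U x.
Hypothesis HdUpos : forall x, interior I x -> 0 < dU x.
Hypothesis Hd2Uneg : forall x, interior I x -> d2U x < 0.
Hypothesis Hincr : forall x y, I x -> I y -> x < y -> U x < U y.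
Hypothesis HUinv : forall x, I x -> Uinv (U x) = x.
Hypothesis HU0 : U 0 = 0.

Let Hint := interior_below_one I HIle.

Lemma dU_decreasing x y : x < y < 1 -> dU y < dU x.
Proof.
  intros Hxy. destruct (MVT_cor2 dU d2U x y ltac:(lra)) as [z [Ez Hz]].
  { intros; apply Hd2U, Hint; lra. }
  pose proof (Hd2Uneg z (Hint z ltac:(lra))).
  assert (d2U z * (y - x) < 0) by (apply Rmult_neg_pos; lra). lra.
Qed.

Lemma U_below_tangent a : a < 0 -> U a <= dU 0 * a.
Proof.
  intros Ha. destruct (MVT_cor2 U dU a 0 Ha) as [z [Ez Hz]].
  { intros; apply HdU, Hint; lra. }
  pose proof (dU_decreasing z 0 ltac:(lra)).
  assert (dU 0 * (0 - a) <= dU z * (0 - a)) by (apply Rmult_le_compat_r; lra).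
  rewrite HU0 in Ez. lra.
Qed.

Lemma U_lipschitz a x y : a <= x -> x < y -> y < 1 -> U y - U x <= dU a * (y - x).
Proof.
  intros Hax Hxy Hy. destruct (MVT_cor2 U dU x y Hxy) as [z [Ez Hz]].
  { intros; apply HdU, Hint; lra. }
  assert (dU z <= dU a)
    by (destruct (Req_dec a z) as [-> | ]; [lra | left; apply dU_decreasing; lra]).
  assert (dU z * (y - x) <= dU a * (y - x)) by (apply Rmult_le_compat_r; lra). lra.
Qed.

Lemma dU_strongly_decreasing a b : a <= b < 1 ->
  exists c, 0 < c /\ forall x y, a <= x -> x < y -> y <= b -> c * (y - x) <= dU x - dU y.
Proof.
  intros Hab. destruct (continuity_ab_maj d2U a b ltac:(lra)) as [xm [Hxm Hxmr]].
  { intros; apply Hd2Uc, Hint; lra. }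
  exists (- d2U xm). split; [pose proof (Hd2Uneg xm (Hint xm ltac:(lra))); lra |].
  intros x y Hx Hxy Hy. destruct (MVT_cor2 dU d2U x y Hxy) as [z [Ez Hz]].
  { intros; apply Hd2U, Hint; lra. }
  pose proof (Hxm z ltac:(lra)).
  assert (d2U z * (y - x) <= d2U xm * (y - x)) by (apply Rmult_le_compat_r; lra). lra.
Qed.

Variables (tau epsilon : R).
Hypothesis Htau : 0 < tau < 1.

(* The levels [U tau + S], [S] in [[epsilon, 0]], are attained by [U] on a
   bounded interval [[a, tau]], where [Uinv] really inverts [U]. *)
Lemma level_preimage : exists a, a < 0 /\ forall S, epsilon <= S <= 0 ->
  a <= Uinv (U tau + S) <= tau /\ U (Uinv (U tau + S)) = U tau + S.
Proof.
  assert (dU0 : 0 < dU 0) by (apply HdUpos, Hint; lra).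
  set (a := - (Rabs (U tau + epsilon) + 1) / dU 0).
  assert (Ha : a < 0).
  { unfold a, Rdiv. apply Rmult_neg_pos; [pose proof (Rabs_pos (U tau + epsilon)); lra |].
    now apply Rinv_0_lt_compat. }
  assert (Hlow : U a < U tau + epsilon).
  { pose proof (U_below_tangent a Ha).
    assert (dU 0 * a = - (Rabs (U tau + epsilon) + 1)) by (unfold a; field; lra).
    pose proof (Rle_abs (- (U tau + epsilon))). rewrite Rabs_Ropp in *. lra. }
  exists a. split; auto. intros S HS.
  assert (exists x, a <= x <= tau /\ U x = U tau + S) as [x [Hx Ex]].
  { destruct (Req_dec S 0) as [-> | HS0]; [exists tau; split; [lra | ring] |].
    destruct (IVT_interv (fun x => U x - (U tau + S)) a tau) as [z [Hz Ez]]; try lra.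
    - intros; apply continuity_pt_minus; [| apply continuity_pt_const; intros ? ?; auto].
      apply derivable_continuous_pt. exists (dU a0). apply HdU, Hint. lra.
    - exists z. split; auto. lra. }
  rewrite <- Ex, HUinv by (apply HIle; lra). auto.
Qed.

Lemma level_profile_bounds : exists Dm K0 K1, 0 < K0 /\ 0 < K1 /\
  (forall S, epsilon <= S <= 0 -> K0 <= level_profile U dU Uinv tau S <= Dm) /\
  (forall S1 S2, epsilon <= S1 -> S1 <= S2 -> S2 <= 0 ->
     K1 * (S2 - S1) <= level_profile U dU Uinv tau S1 - level_profile U dU Uinv tau S2).
Proof.
  destruct level_preimage as [a [Ha Hpre]].
  destruct (dU_strongly_decreasing a tau ltac:(lra)) as [c [Hc Hslope]].
  assert (HDm : 0 < dU a) by (apply HdUpos, Hint; lra).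
  exists (dU a), (dU tau), (c / dU a). unfold level_profile.
  split; [apply HdUpos, Hint; lra |]. split; [now apply Rdiv_lt_0_compat |]. split.
  - intros S HS. destruct (Hpre S HS) as [Hb _].
    set (x := Uinv (U tau + S)) in *. split.
    + destruct (Req_dec x tau) as [-> | ]; [lra | left; apply dU_decreasing; lra].
    + destruct (Req_dec x a) as [-> | ]; [lra | left; apply dU_decreasing; lra].
  - intros S1 S2 H1 H12 H2.
    destruct (Hpre S1 ltac:(lra)) as [Hb1 E1]. destruct (Hpre S2 ltac:(lra)) as [Hb2 E2].
    destruct (Req_dec S1 S2) as [-> | HS]; [lra |].
    set (x1 := Uinv (U tau + S1)) in *. set (x2 := Uinv (U tau + S2)) in *.
    assert (Hx : x1 < x2).
    { destruct (Rlt_le_dec x1 x2) as [| Hle]; auto.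
      destruct (Req_dec x2 x1) as [E | ]; [rewrite E in E2; lra |].
      pose proof (Hincr x2 x1 ltac:(apply HIle; lra) ltac:(apply HIle; lra) ltac:(lra)). lra. }
    pose proof (Hslope x1 x2 ltac:(lra) Hx ltac:(lra)).
    pose proof (U_lipschitz a x1 x2 ltac:(lra) Hx ltac:(lra)).
    assert (c / dU a * (S2 - S1) <= c / dU a * (dU a * (x2 - x1)))
      by (apply Rmult_le_compat_l; [left; now apply Rdiv_lt_0_compat | lra]).
    replace (c / dU a * (dU a * (x2 - x1))) with (c * (x2 - x1)) in * by (field; lra).
    lra.
Qed.

End LevelProfile.


Lemma pos_nth l m : NoDup l -> (m < length l)%nat -> Defs.pos (nth m l 0%nat) l = Some m.
Proof.
  revert m; induction l as [| x r IH]; intros m Hnd Hm; simpl in *; [lia |].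
  inversion Hnd as [| ? ? Hx Hnd']; subst. destruct m as [| m].
  - now rewrite Nat.eqb_refl.
  - destruct (Nat.eqb_spec x (nth m r 0%nat)) as [E | ].
    + exfalso. apply Hx. rewrite E. apply nth_In. lia.
    + rewrite IH; auto. lia.
Qed.

Lemma pos_some j l m : Defs.pos j l = Some m -> (m < length l)%nat.
Proof.
  revert m; induction l as [| x r IH]; intros m H; simpl in *; [discriminate |].
  destruct (Nat.eqb x j); [injection H as <-; lia |].
  destruct (Defs.pos j r) as [k |] eqn:E; [| discriminate].
  injection H as <-. specialize (IH k eq_refl). lia.
Qed.

Lemma pos_none j l : ~ In j l -> Defs.pos j l = None.
Proof.
  induction l as [| x r IH]; intros H; simpl; auto.
  destruct (Nat.eqb_spec x j) as [-> | ]; [exfalso; apply H; now left |].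
  rewrite IH; auto. intro; apply H; now right.
Qed.

(** * Rows of the stability matrix

   Writing [g S = U'(U^{-1}(U tau + S))] and [S_n] for the partial sums of
   the couplings of node [i] in the chosen order, [p_{i,n} = g(S_n) / g(epsilon)].
   Inhibition makes [S_n] decrease from 0 to [epsilon], so [p_{i,n}]
   increases from [p_{i,0} > 0] to [p_{i,k_i} = 1]: each row of [A(O)] is a
   probability vector, and its positive entries are bounded below uniformly. *)

Definition coupling_partial_sum (eps : nat -> nat -> R) (O : nat -> list nat) (i n : nat) : R :=
  rsum (fun m => eps i (nth m (O i) 0%nat)) n.

Lemma p_coef_profile U dU Uinv tau epsilon eps O i n :
  p_coef U dU Uinv tau epsilon eps O i n
  = level_profile U dU Uinv tau (coupling_partial_sum eps O i n)
    / level_profile U dU Uinv tau epsilon.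
Proof. reflexivity. Qed.

Definition entry_floor (K0 K1 Dm e : R) : R := Rmin (K0 / Dm) (K1 * e / Dm).

Lemma entry_floor_pos K0 K1 Dm e :
  0 < K0 -> K0 <= Dm -> 0 < K1 -> 0 < e -> 0 < entry_floor K0 K1 Dm e.
Proof. intros. apply Rmin_pos; apply Rdiv_lt_0_compat; nra. Qed.

Section StabilityRow.

Variables (U dU Uinv : R -> R) (tau epsilon : R) (eps : nat -> nat -> R) (N : nat).
Variables (O : nat -> list nat) (Dm K0 K1 e : R).
Hypothesis HK0 : 0 < K0.
Hypothesis HK1 : 0 < K1.
Hypothesis He : 0 < e.
Hypothesis Hprofile : forall S, epsilon <= S <= 0 -> K0 <= level_profile U dU Uinv tau S <= Dm.
Hypothesis Hslope : forall S1 S2, epsilon <= S1 -> S1 <= S2 -> S2 <= 0 ->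
  K1 * (S2 - S1) <= level_profile U dU Uinv tau S1 - level_profile U dU Uinv tau S2.
Hypothesis Hgap : forall i j, (i < N)%nat -> (j < N)%nat -> eps i j <> 0 -> e <= Rabs (eps i j).
Hypothesis Hinh : forall i j, (i < N)%nat -> (j < N)%nat -> eps i j <= 0.
Hypothesis HO : is_ordering N eps O.

Variable i : nat.
Hypothesis Hi : (i < N)%nat.
Hypothesis Hsum : rsum (fun j => eps i j) N = epsilon.

Local Notation g := (level_profile U dU Uinv tau).
Local Notation p := (p_coef U dU Uinv tau epsilon eps O i).
Local Notation Ps := (coupling_partial_sum eps O i).

Lemma ordering_bounded j : In j (O i) -> (j < N)%nat.
Proof. intros Hj. now apply (proj2 (HO i Hi) j) in Hj as [? _]. Qed.

Lemma coupling_step_bound t : (t < length (O i))%nat -> eps i (nth t (O i) 0%nat) <= - e.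
Proof.
  intros Ht. assert (Hin : In (nth t (O i) 0%nat) (O i)) by now apply nth_In.
  apply (proj2 (HO i Hi)) in Hin as [Hj Hne].
  pose proof (Hgap i _ Hi Hj Hne). pose proof (Hinh i _ Hi Hj).
  rewrite Rabs_left1 in * by auto. lra.
Qed.

Lemma coupling_partial_sum_total : Ps (length (O i)) = epsilon.
Proof.
  rewrite <- Hsum. symmetry. apply rsum_along_list.
  - apply (HO i Hi).
  - apply ordering_bounded.
  - intros j Hj Hn. apply NNPP. intros Hne. apply Hn, (HO i Hi). now split.
Qed.

Lemma coupling_partial_sum_range m : (m <= length (O i))%nat -> epsilon <= Ps m <= 0.
Proof.
  intros Hm. rewrite <- coupling_partial_sum_total.
  apply rsum_partial_nonpos; auto.
  intros t Ht. pose proof (coupling_step_bound t Ht). lra.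
Qed.

Lemma profile_end_bounds : K0 <= g epsilon <= Dm.
Proof.
  apply Hprofile. pose proof (coupling_partial_sum_range (length (O i)) (le_n _)).
  rewrite coupling_partial_sum_total in *. lra.
Qed.

Lemma p_coef_first : entry_floor K0 K1 Dm e <= p 0%nat.
Proof.
  pose proof profile_end_bounds. rewrite p_coef_profile.
  eapply Rle_trans; [apply Rmin_l |]. unfold Rdiv.
  apply Rmult_le_compat; [lra | left; apply Rinv_0_lt_compat; lra | |].
  - apply Hprofile. apply coupling_partial_sum_range. lia.
  - apply Rinv_le_contravar; lra.
Qed.

Lemma p_coef_increment m : (m < length (O i))%nat ->
  entry_floor K0 K1 Dm e <= p (S m) - p m.
Proof.
  intros Hm. pose proof profile_end_bounds. rewrite !p_coef_profile.
  pose proof (coupling_step_bound m Hm).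
  pose proof (coupling_partial_sum_range m ltac:(lia)).
  pose proof (coupling_partial_sum_range (S m) Hm) as HS.
  change (Ps (S m)) with (Ps m + eps i (nth m (O i) 0%nat)) in HS.
  pose proof (Hslope (Ps m + eps i (nth m (O i) 0%nat)) (Ps m) ltac:(lra) ltac:(lra) ltac:(lra)).
  change (coupling_partial_sum eps O i (S m)) with (Ps m + eps i (nth m (O i) 0%nat)).
  unfold Rdiv. rewrite <- Rmult_minus_distr_r.
  eapply Rle_trans; [apply Rmin_r |]. unfold Rdiv.
  apply Rmult_le_compat; [nra | left; apply Rinv_0_lt_compat; lra | nra |].
  apply Rinv_le_contravar; lra.
Qed.

Lemma p_coef_last : p (length (O i)) = 1.
Proof.
  pose proof profile_end_bounds. rewrite p_coef_profile.
  rewrite coupling_partial_sum_total. field. lra.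
Qed.

Hypothesis Hii : eps i i = 0.

Local Notation A := (Amat U dU Uinv tau epsilon eps O).

Lemma Amat_offdiag j : i <> j ->
  A i j = match Defs.pos j (O i) with Some m => p (S m) - p m | None => 0 end.
Proof. intros Hij. unfold Amat. now destruct (Nat.eqb_spec i j). Qed.

Lemma Amat_diag_floor : entry_floor K0 K1 Dm e <= A i i.
Proof. unfold Amat. rewrite Nat.eqb_refl. apply p_coef_first. Qed.

Lemma Amat_nonneg j : 0 <= A i j.
Proof.
  pose proof profile_end_bounds.
  assert (0 < entry_floor K0 K1 Dm e) by (apply entry_floor_pos; lra).
  destruct (Nat.eq_dec i j) as [<- | Hij]; [pose proof Amat_diag_floor; lra |].
  rewrite Amat_offdiag by auto. destruct (Defs.pos j (O i)) as [m |] eqn:E; [| lra].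
  pose proof (p_coef_increment m (pos_some _ _ _ E)). lra.
Qed.

Lemma Amat_edge_floor j : Pre N eps i j -> entry_floor K0 K1 Dm e <= A i j.
Proof.
  intros Hj. assert (Hij : i <> j) by (intros <-; destruct Hj; contradiction).
  apply (HO i Hi) in Hj. destruct (In_nth _ _ 0%nat Hj) as [m [Hm <-]].
  rewrite Amat_offdiag, pos_nth by (auto; apply (HO i Hi)). now apply p_coef_increment.
Qed.

(* Row sums telescope: [p_{i,0} + sum_n (p_{i,n} - p_{i,n-1}) = p_{i,k_i} = 1]. *)
Lemma Amat_row_sum : rsum (A i) N = 1.
Proof.
  set (inc := fun j => match Defs.pos j (O i) with Some m => p (S m) - p m | None => 0 end).
  assert (Hself : Defs.pos i (O i) = None).
  { apply pos_none. intros Hin. apply (HO i Hi) in Hin as [_ Hne]. contradiction. }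
  rewrite (rsum_ext _ (fun j => (if Nat.eqb i j then p 0%nat else 0) + inc j)).
  - rewrite rsum_plus, rsum_indicator, (rsum_along_list N (O i) inc) by
      (auto; try apply (HO i Hi); try apply ordering_bounded;
       intros j _ Hn; unfold inc; now rewrite pos_none).
    rewrite (rsum_ext _ (fun m => p (S m) - p m)).
    + rewrite rsum_telescope, p_coef_last. ring.
    + intros m Hm. unfold inc. rewrite pos_nth; auto. apply (HO i Hi).
  - intros j _. destruct (Nat.eq_dec i j) as [<- | Hij].
    + unfold Amat, inc. rewrite Nat.eqb_refl, Hself. ring.
    + rewrite Amat_offdiag by auto. destruct (Nat.eqb_spec i j); [contradiction | unfold inc; ring].
Qed.

End StabilityRow.

(** With [W l = A(O_{l+1})] the sequence [delta] is an averaging dynamics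
   with floor [entry_floor K0 K1 Dm e]; the diameter bounds walk lengths.
   The argument holds for arbitrary orderings. *)

Theorem mainTheorem7
  (I : R -> Prop) (U dU d2U Uinv : R -> R)
  (HI : is_interval I) (HIle : forall x, x <= 1 -> I x)
  (HdU : forall x, interior I x -> derivable_pt_lim U x (dU x))
  (Hd2U : forall x, interior I x -> derivable_pt_lim dU x (d2U x))
  (Hd2Uc : forall x, interior I x -> continuity_pt d2U x)
  (HdUpos : forall x, interior I x -> 0 < dU x)
  (Hd2Uneg : forall x, interior I x -> d2U x < 0)
  (Hincr : forall x y, I x -> I y -> x < y -> U x < U y)
  (HU0 : U 0 = 0) (HU1 : U 1 = 1)
  (HUinv : forall x, I x -> Uinv (U x) = x)
  (N : nat) (HN : (2 <= N)%nat)
  (tau : R) (Htau : 0 < tau < 1)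
  (eps : nat -> nat -> R) (epsilon : R)
  (Hdiag : forall i, (i < N)%nat -> eps i i = 0)
  (Hne : forall i, (i < N)%nat -> exists j, Pre N eps i j)
  (Hsum : forall i, (i < N)%nat -> rsum (fun j => eps i j) N = epsilon)
  (Hinh : forall i j, (i < N)%nat -> (j < N)%nat -> eps i j <= 0)
  (Heps : epsilon < 0)
  (Hsc : strongly_connected N eps)
  (lc : nat) (Hlc : is_diameter N eps lc)
  (delta : nat -> nat -> R) (Ord : nat -> nat -> list nat)
  (HOrd : forall l, (1 <= l)%nat -> is_ordering N eps (Ord l))
  (Hcons : forall l, (1 <= l)%nat -> consistent N (Ord l) (delta (l - 1)%nat))
  (Hrec : forall l i, (1 <= l)%nat -> (i < N)%nat ->
     delta l i = rsum (fun j => Amat U dU Uinv tau epsilon eps (Ord l) i j * delta (l - 1)%nat j) N) :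
  ((forall i, (i < N)%nat -> 0 <= delta O i) ->
   ~ (exists c, forall i, (i < N)%nat -> delta O i = c) ->
   forall l, (lc <= l)%nat -> vmax N (delta l) < vmax N (delta O))
  /\
  (exists c : R, forall i, (i < N)%nat -> Un_cv (fun l => delta l i) c).
Proof.
  destruct (level_profile_bounds I U dU d2U Uinv HIle HdU Hd2U Hd2Uc HdUpos Hd2Uneg
              Hincr HUinv HU0 tau epsilon Htau) as (Dm & K0 & K1 & HK0 & HK1 & Hprof & Hslope).
  destruct (nonzero_entries_bounded_away eps N N) as [e [He Hgap]].
  assert (Hfloor : 0 < entry_floor K0 K1 Dm e).
  { pose proof (Hprof 0 ltac:(lra)). apply entry_floor_pos; auto; lra. }
  assert (HO : forall l, is_ordering N eps (Ord (S l))) by (intros; apply HOrd; lia).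
  set (W := fun l => Amat U dU Uinv tau epsilon eps (Ord (S l))).
  assert (Hd : averaged N W delta).
  { intros l i Hi. rewrite Hrec by (auto; lia). now rewrite Nat.sub_succ, Nat.sub_0_r. }
  assert (W_nonneg : forall l i j, (i < N)%nat -> (j < N)%nat -> 0 <= W l i j)
    by (intros; eapply Amat_nonneg with (Dm := Dm) (K0 := K0) (K1 := K1) (e := e); eauto).
  assert (W_stochastic : forall l i, (i < N)%nat -> rsum (W l i) N = 1)
    by (intros; eapply Amat_row_sum with (Dm := Dm) (K0 := K0) (e := e); eauto).
  assert (W_diag : forall l i, (i < N)%nat -> entry_floor K0 K1 Dm e <= W l i i)
    by (intros; eapply Amat_diag_floor; eauto).
  assert (W_edge : forall l i j, (i < N)%nat -> Pre N eps i j -> entry_floor K0 K1 Dm e <= W l i j)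
    by (intros; eapply Amat_edge_floor with (K0 := K0) (K1 := K1); eauto).
  destruct Hlc as [Hwalk _].
  split.
  - intros _. eapply averaging_max_drops; eauto. lia.
  - eapply averaging_consensus; eauto. lia.
Qed.
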